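(* Let $n > 0$ be real and $m \ge 1$ an integer. For $a \in (0,n]$ let $\Delta_a^m$ be the set of real polynomials $h(t) = u_m t^m + \dots + u_1 t + u_0$ of degree exactly $m$ with all coefficients $u_i \ge 0$ such that, as a function on $[-n,n]$, $h$ attains its minimum at the point $-a$, and $h'(-a) = 0$. Then: (1) If $m$ is even, then $$ \min_{a\in(0,n]}\ \min_{h\in\Delta_a^m} \frac{h(n)}{2h(n)-2h(-a)} = \min_{h\in\Delta_n^m}\frac{h(n)}{2h(n)-2h(-n)} = \frac{h^*(n)}{2h^*(n)-2h^*(-n)} = \frac{m+1}{4m}, $$ where $h^*(t) = t^m + m n^{m-1} t$ (which belongs to $\Delta_n^m$). (2) If $m \ge 2$ is odd, then $$ \inf_{h\in\Delta_n^m}\frac{h(n)}{2h(n)-2h(-n)} \ge \min_{h\in\Delta_n^{m-1}}\frac{h(n)}{2h(n)-2h(-n)}. $$ *)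

From HB Require Import structures.
From mathcomp Require Import all_boot all_order all_algebra.
Set Implicit Arguments. Unset Strict Implicit. Unset Printing Implicit Defensive.
Import Order.TTheory GRing.Theory Num.Theory.
Local Open Scope ring_scope.

Definition DeltaAM {R : rcfType} (n a : R) (m : nat) (h : {poly R}) : Prop :=
  [/\ size h = m.+1,
      (forall i : nat, 0 <= h`_i),
      (forall t : R, - n <= t <= n -> h.[- a] <= h.[t])
    & (h^`()).[- a] = 0].

Definition ratioH {R : rcfType} (n a : R) (h : {poly R}) : R :=
  h.[n] / (2 * h.[n] - 2 * h.[- a]).

Definition hstar {R : rcfType} (n : R) (m : nat) : {poly R} :=
  'X^m + (m%:R * n ^+ m.-1) *: 'X.

From HB Require Import structures.
From mathcomp Require Import all_boot all_order all_algebra.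
From mathcomp Require Import ring lra.
Set Implicit Arguments.
Unset Strict Implicit.
Unset Printing Implicit Defensive.
Import Order.TTheory GRing.Theory Num.Theory.
Local Open Scope ring_scope.

(* Write h = \sum_i u_i t^i with u_i >= 0 and 0 <= a <= n.  If h has no even
   monomial of degree above k, then (k-1) h(n) + (k+1) h(-a) + 2a h'(-a) is a
   combination of the u_i with nonnegative weights; when h'(-a) = 0 this is
   exactly the inequality h(n) / (2h(n) - 2h(-a)) >= (k+1)/(4k), the
   denominator being positive because m (h(n) - h(-a)) - a h'(-a) is likewise
   a nonnegative combination whose top term is m u_m n^m > 0.  For m even take
   k = m; for m odd the top monomial is odd, so k = m-1 applies both to
   \Delta_n^m and to \Delta_n^(m-1).  Equality holds for h*, whose minimality
   on [-n, n] comes from the bound |t^m - s^m| <= m n^(m-1) |t - s|. *)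

Lemma horner_Xderiv (R : comNzRingType) (p : {poly R}) (x : R) :
  x * (p^`()).[x] = \sum_(i < size p) p`_i * (i%:R * x ^+ i).
Proof.
case Ep: (size p) => [|s].
  by move/eqP: Ep; rewrite size_poly_eq0 => /eqP ->; rewrite deriv0 horner0 mulr0 big_ord0.
rewrite big_ord_recl /= mul0r mulr0 add0r /deriv horner_poly Ep /= mulr_sumr.
by apply: eq_bigr => i _; rewrite /bump /= add1n exprS -mulr_natr; ring.
Qed.

Section NonnegCoef.
Variables (R : realDomainType) (a n : R) (p : {poly R}).
Hypotheses (a_ge0 : 0 <= a) (a_le_n : a <= n) (p_ge0 : forall i, 0 <= p`_i).

Let n_ge0 : 0 <= n. Proof. exact: le_trans a_ge0 a_le_n. Qed.

Let exprN_le (i : nat) : `|(- a) ^+ i| <= n ^+ i.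
Proof. by rewrite normrX normrN ger0_norm // lerXn2r. Qed.

Lemma weighted_horner_ge0 (k : nat) : (0 < k)%N ->
  (forall i, (k < i)%N -> ~~ odd i -> p`_i = 0) ->
  0 <= (k%:R - 1) * p.[n] + (k%:R + 1) * p.[- a] + 2 * a * (p^`()).[- a].
Proof.
move=> k_gt0 p_even.
have -> : 2 * a * (p^`()).[- a] = - 2 * (- a * (p^`()).[- a]) by ring.
rewrite horner_Xderiv !horner_coef !mulr_sumr -!big_split /=.
apply: sumr_ge0 => i _.
have -> : (k%:R - 1) * (p`_i * n ^+ i) + (k%:R + 1) * (p`_i * (- a) ^+ i)
    + - 2 * (p`_i * (i%:R * (- a) ^+ i))
    = p`_i * ((k%:R - 1) * n ^+ i + (k%:R + 1 - 2 * i%:R) * (- a) ^+ i) by ring.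
have k_ge1 : 1 <= k%:R :> R by rewrite ler1n.
have ai_ge0 : 0 <= a ^+ i := exprn_ge0 _ a_ge0.
have ai_le : a ^+ i <= n ^+ i by rewrite lerXn2r.
rewrite exprNn -signr_odd; case: (boolP (odd i)) => [odd_i|even_i].
  have i_ge1 : 1 <= i%:R :> R by rewrite ler1n; case: (nat_of_ord i) odd_i.
  rewrite expr1; apply: mulr_ge0 => //; nra.
have [k_lt_i | i_le_k] := ltnP k i; first by rewrite p_even ?mul0r.
have i_le : i%:R <= k%:R :> R by rewrite ler_nat.
rewrite expr0; apply: mulr_ge0 => //; nra.
Qed.

Lemma horner_lt_of_deriv_eq0 : 0 < n -> (1 < size p)%N ->
  (p^`()).[- a] = 0 -> p.[- a] < p.[n].
Proof.
move=> n_gt0 size_p dp0; set m := (size p).-1.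
have size_pE : size p = m.+1 by rewrite prednK // ltnW.
have m_gt0 : (0 < m)%N by rewrite -ltnS -size_pE.
suff : 0 < m%:R * (p.[n] - p.[- a]) + - a * (p^`()).[- a].
  by rewrite dp0 mulr0 addr0 pmulr_rgt0 ?ltr0n // subr_gt0.
rewrite horner_Xderiv !horner_coef -sumrB mulr_sumr -big_split /= size_pE.
rewrite big_ord_recr /=; apply: ltr_wpDl.
  apply: sumr_ge0 => i _ /=.
  have -> : m%:R * (p`_i * n ^+ i - p`_i * (- a) ^+ i) + p`_i * (i%:R * (- a) ^+ i)
      = p`_i * ((m%:R - i%:R) * (n ^+ i - (- a) ^+ i) + i%:R * n ^+ i) by ring.
  have /ler_normlP [_ ai_le] := exprN_le i.
  have im : i%:R <= m%:R :> R by rewrite ler_nat ltnW.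
  apply: mulr_ge0 => //.
  by rewrite addr_ge0 ?mulr_ge0 ?subr_ge0 ?ler0n ?exprn_ge0.
have -> : m%:R * (p`_m * n ^+ m - p`_m * (- a) ^+ m) + p`_m * (m%:R * (- a) ^+ m)
    = p`_m * (m%:R * n ^+ m) by ring.
have lead_gt0 : 0 < p`_m.
  rewrite lt_def p_ge0 andbT -[m]/((size p).-1) -lead_coefE lead_coef_eq0.
  by rewrite -size_poly_eq0 size_pE.
by rewrite !mulr_gt0 ?ltr0n ?exprn_gt0.
Qed.

End NonnegCoef.

Lemma coef_even_gt_eq0 (R : nzRingType) (p : {poly R}) (k : nat) :
  ~~ odd k -> (size p <= k.+2)%N -> forall i, (k < i)%N -> ~~ odd i -> p`_i = 0.
Proof.
move=> k_even size_p i; rewrite leq_eqVlt => /orP[/eqP <- | k1_lt_i] i_even.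
  by rewrite /= k_even in i_even.
exact/nth_default/(leq_trans size_p).
Qed.

Lemma ratioH_ge (R : rcfType) (n a : R) (k : nat) (h : {poly R}) :
  0 <= a <= n -> 0 < n -> (0 < k)%N -> (1 < size h)%N -> (forall i, 0 <= h`_i) ->
  (forall i, (k < i)%N -> ~~ odd i -> h`_i = 0) -> (h^`()).[- a] = 0 ->
  k.+1%:R / (4 * k%:R) <= ratioH n a h.
Proof.
move=> /andP[a_ge0 a_le_n] n_gt0 k_gt0 size_h h_ge0 h_even dh0.
have gap := horner_lt_of_deriv_eq0 a_ge0 a_le_n h_ge0 n_gt0 size_h dh0.
have := weighted_horner_ge0 a_ge0 a_le_n h_ge0 k_gt0 h_even.
rewrite dh0 mulr0 addr0 => weighted_ge0.
have k_pos : 0 < k%:R :> R by rewrite ltr0n.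
rewrite /ratioH ler_pdivlMr; last by rewrite subr_gt0 ltr_pM2l.
rewrite mulrAC ler_pdivrMr ?mulr_gt0 // -natr1; nra.
Qed.

Lemma ler_distXn (R : realDomainType) (c x y : R) (m : nat) :
  `|x| <= c -> `|y| <= c -> `|x ^+ m - y ^+ m| <= m%:R * c ^+ m.-1 * `|x - y|.
Proof.
move=> x_le y_le; case: m => [|m]; first by rewrite subrr normr0 !mul0r.
rewrite subrXX normrM mulrC ler_wpM2r //.
have -> : m.+1%:R * c ^+ m.+1.-1 = \sum_(i < m.+1) c ^+ m.
  by rewrite sumr_const card_ord mulr_natl.
apply: le_trans (ler_norm_sum _ _ _) _; apply: ler_sum => i _ /=.
have -> : c ^+ m = c ^+ (m - i) * c ^+ i by rewrite -exprD subnK // -ltnS.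
have c_ge0 : 0 <= c := le_trans (normr_ge0 _) x_le.
by rewrite normrM !normrX ler_pM ?exprn_ge0 ?lerXn2r ?nnegrE ?normr_ge0.
Qed.

Section Hstar.
Variables (R : rcfType) (n : R) (m : nat).
Hypotheses (n_gt0 : 0 < n) (m_even : ~~ odd m) (m_gt0 : (0 < m)%N).

Let hstarE (t : R) : (hstar n m).[t] = t ^+ m + m%:R * n ^+ m.-1 * t.
Proof. by rewrite /hstar hornerD hornerXn hornerZ hornerX. Qed.

Let exprNn_even (t : R) : (- t) ^+ m = t ^+ m.
Proof. by rewrite exprNn -signr_odd (negbTE m_even) expr0 mul1r. Qed.

Lemma hstar_DeltaAM : DeltaAM n n m (hstar n m).
Proof.
have m_gt1 : (1 < m)%N by case: m m_even m_gt0 => [|[]].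
split.
- rewrite /hstar size_polyDl size_polyXn //.
  by rewrite (leq_ltn_trans (size_scale_leq _ _)) // size_polyX ltnS.
- move=> i; rewrite /hstar coefD coefXn coefZ coefX.
  by rewrite addr_ge0 ?mulr_ge0 ?ler0n // exprn_ge0 // ltW.
- move=> t /andP[t_ge t_le]; rewrite -subr_ge0 !hstarE.
  have t_norm : `|t| <= n by rewrite ler_norml t_ge t_le.
  have n_norm : `|- n| <= n by rewrite normrN gtr0_norm.
  have /ler_normlP [lb _] := ler_distXn m t_norm n_norm.
  have tn_ge0 : 0 <= t + n by lra.
  move: lb; rewrite opprK ger0_norm //; lra.
- rewrite /hstar derivD derivXn derivZ derivX !hornerE hornerMn hornerXn exprNn -signr_odd.
  have -> : odd m.-1 by move: m_even; rewrite -(prednK m_gt0) /= negbK.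
  by rewrite expr1 mulN1r mulNrn mulr_natl addNr.
Qed.

Lemma ratioH_hstar : ratioH n n (hstar n m) = m.+1%:R / (4 * m%:R).
Proof.
have nm : n ^+ m = n ^+ m.-1 * n by rewrite -exprSr prednK.
have hstar_n : (hstar n m).[n] = m.+1%:R * n ^+ m.
  by rewrite hstarE nm -natr1; ring.
have hstar_Nn : (hstar n m).[- n] = (1 - m%:R) * n ^+ m.
  by rewrite hstarE exprNn_even nm; ring.
rewrite /ratioH hstar_n hstar_Nn.
have -> : 2 * (m.+1%:R * n ^+ m) - 2 * ((1 - m%:R) * n ^+ m) = 4 * m%:R * n ^+ m.
  by rewrite -natr1; ring.
by rewrite -mulf_div divff ?mulr1 // expf_neq0 // gt_eqF.
Qed.

End Hstar.

Lemma DeltaAM_ratioH_ge (R : rcfType) (n a : R) (k M : nat) (h : {poly R}) :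
  0 < a <= n -> (0 < k)%N -> ~~ odd k -> (k <= M <= k.+1)%N -> DeltaAM n a M h ->
  k.+1%:R / (4 * k%:R) <= ratioH n a h.
Proof.
move=> /andP[a_gt0 a_le_n] k_gt0 k_even /andP[kM Mk] [size_h h_ge0 _ dh0].
apply: ratioH_ge => //; first by rewrite ltW.
- exact: lt_le_trans a_le_n.
- by rewrite size_h ltnS (leq_trans k_gt0).
- by apply: coef_even_gt_eq0; rewrite ?size_h.
Qed.

Theorem mainTheorem7 (R : rcfType) (n : R) (m : nat) (hn : 0 < n) (hm : (1 <= m)%N) :
  (~~ odd m ->
     [/\ DeltaAM n n m (hstar n m),
         ratioH n n (hstar n m) = (m.+1)%:R / (4 * m%:R),
         (forall (a : R) (h : {poly R}), 0 < a <= n -> DeltaAM n a m h ->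
            (m.+1)%:R / (4 * m%:R) <= ratioH n a h)
       & (forall h : {poly R}, DeltaAM n n m h -> ratioH n n (hstar n m) <= ratioH n n h)])
  /\
  (odd m -> (2 <= m)%N ->
     exists2 h0 : {poly R}, DeltaAM n n m.-1 h0 &
       (forall g : {poly R}, DeltaAM n n m.-1 g -> ratioH n n h0 <= ratioH n n g) /\
       (forall h : {poly R}, DeltaAM n n m h -> ratioH n n h0 <= ratioH n n h)).
Proof.
have n_in : 0 < n <= n by rewrite hn lexx.
split=> [m_even | m_odd m_ge2].
  have bound a h : 0 < a <= n -> DeltaAM n a m h -> m.+1%:R / (4 * m%:R) <= ratioH n a h.
    by move=> a_in; apply: DeltaAM_ratioH_ge; rewrite ?leqnn ?leqnSn.
  split; [exact: hstar_DeltaAM | exact: ratioH_hstar | exact: bound |].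
  by move=> h; rewrite ratioH_hstar //; apply: bound.
have m_pos : (0 < m)%N := ltnW m_ge2.
have m1_gt0 : (0 < m.-1)%N by rewrite -subn1 subn_gt0.
have m1_even : ~~ odd m.-1 by move: m_odd; rewrite -{1}(prednK m_pos) /=.
exists (hstar n m.-1); first exact: hstar_DeltaAM.
rewrite ratioH_hstar //; split=> h; apply: DeltaAM_ratioH_ge => //.
  by rewrite leqnn leqnSn.
by rewrite prednK // leq_pred leqnn.
Qed.
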